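(* Let $G$ be the automorphism group of $(\mathbb{Q},<)$ and let $f \in G$. Then the following are equivalent: (i) there exist $g, g_1, g_2 \in G$ such that $g$ is a restriction of $f$, $g_1$ is a bump which is an orbital of $g$ (in the group-element sense defined in the context), $g = g_1 g_2$, and $g$ is conjugate in $G$ to $g_2$; (ii) $f$ has infinitely many non-trivial orbitals.
   Context: For $f \in G$, an orbital of $f$ is an equivalence class of $\mathbb{Q}$ under the relation $a \sim b$ iff there are integers $m,n$ with $f^m a \le b \le f^n a$; it is non-trivial if it has more than one point. The support of an element of $G$ is the set of points it moves. A bump is a non-identity element of $G$ with exactly one non-trivial orbital. An element $g$ is a restriction of $f$ if the support of $g$ is contained in that of $f$ and $g$ agrees with $f$ on the support of $g$. An element $g_1$ is an orbital of $g$ if $g_1$ is a bump whose support is contained in that of $g$ and $g_1$ agrees with $g$ on its support. Condition (i) is the meaning in $G$ of the first-order group-theoretic formula ${\bf inf}(x)$ used in the paper. *)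

From HB Require Import structures.
From mathcomp Require Import all_boot all_order all_algebra.
From mathcomp Require Import boolp classical_sets cardinality.
Set Implicit Arguments. Unset Strict Implicit. Unset Printing Implicit Defensive.
Import Order.TTheory GRing.Theory Num.Theory.
Local Open Scope ring_scope.
Local Open Scope classical_set_scope.

Record aut := Aut {
  fn :> rat -> rat;
  finv : rat -> rat;
  fnK : cancel fn finv;
  finvK : cancel finv fn;
  fn_mono : forall x y : rat, x < y -> fn x < fn y }.

Definition zpow (f : aut) (m : int) : rat -> rat :=
  match m with
  | Posz n => iter n (fn f)
  | Negz n => iter n.+1 (finv f)
  end.

Definition orb_rel (f : aut) (a b : rat) : Prop :=
  exists m n : int, zpow f m a <= b /\ b <= zpow f n a.

Definition orbital_of (f : aut) (a : rat) : set rat := [set b | orb_rel f a b].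

Definition nontriv_orbitals (f : aut) : set (set rat) :=
  [set A | (exists a, A = orbital_of f a) /\
           exists b c, A b /\ A c /\ b <> c].

Definition supp (f : aut) : set rat := [set x | f x <> x].

Definition is_bump (f : aut) : Prop :=
  (exists x, f x <> x) /\ exists A, nontriv_orbitals f = [set A].

Definition restriction (g f : aut) : Prop :=
  supp g `<=` supp f /\ forall x, supp g x -> g x = f x.

Definition orbital_elt (g1 g : aut) : Prop :=
  is_bump g1 /\ supp g1 `<=` supp g /\ forall x, supp g1 x -> g1 x = g x.

Definition is_prod (g g1 g2 : aut) : Prop := forall x, g x = g1 (g2 x).

Definition conjugate (g g2 : aut) : Prop :=
  exists h : aut, forall x, g (h x) = h (g2 x).

From mathcomp Require Import all_boot all_order all_algebra.
From mathcomp Require Import boolp classical_sets cardinality.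
From mathcomp Require Import zify ring.
Set Implicit Arguments. Unset Strict Implicit. Unset Printing Implicit Defensive.
Import Order.TTheory GRing.Theory Num.Theory.
Local Open Scope ring_scope.
Local Open Scope classical_set_scope.

Lemma aut_ltE (f : aut) : {mono f : x y / x < y}.
Proof. exact/leW_mono/le_mono/fn_mono. Qed.

Lemma aut_leE (f : aut) : {mono f : x y / x <= y}.
Proof. exact/le_mono/fn_mono. Qed.

Lemma aut_inj (f : aut) : injective f.
Proof. exact: can_inj (fnK f). Qed.

Lemma finv_lt (f : aut) : {homo finv f : x y / x < y}.
Proof. by move=> x y xy; rewrite -(aut_ltE f) !finvK. Qed.

Definition inv_aut (f : aut) : aut := Aut (finvK f) (fnK f) (@finv_lt f).

Lemma zpow1D (f : aut) (j : int) x : zpow f (1 + j) x = f (zpow f j x).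
Proof.
case: j => [n|[|n]]; first by rewrite -PoszD add1n.
  by rewrite /= finvK.
have -> : 1 + Negz n.+1 = Negz n by rewrite !NegzE; lia.
by rewrite /= finvK.
Qed.

Lemma zpowD1 (f : aut) (j : int) x : zpow f (j + 1) x = f (zpow f j x).
Proof. by rewrite addrC zpow1D. Qed.

Lemma zpowN1D (f : aut) (j : int) x : zpow f (-1 + j) x = finv f (zpow f j x).
Proof.
case: j => [[|n]|n] //.
have -> : -1 + n.+1%:Z = n by lia.
by rewrite /= fnK.
Qed.

Lemma zpowD (f : aut) (i j : int) x : zpow f (i + j) x = zpow f i (zpow f j x).
Proof.
case: i => n; elim: n => [|n IH]; rewrite ?add0r //.
- by rewrite -add1n PoszD -addrA zpow1D IH.
- by rewrite NegzE zpowN1D.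
- have -> : Negz n.+1 + j = -1 + (Negz n + j) by rewrite !NegzE; lia.
  by rewrite zpowN1D IH.
Qed.

Lemma zpowK (f : aut) k : cancel (zpow f k) (zpow f (- k)).
Proof. by move=> x; rewrite -zpowD addNr. Qed.

Lemma zpowNK (f : aut) k : cancel (zpow f (- k)) (zpow f k).
Proof. by move=> x; rewrite -zpowD addrN. Qed.

Lemma zpow_lt (f : aut) k : {homo zpow f k : x y / x < y}.
Proof.
move=> x y xy; case: k => n /=; elim: n => [|n IH] //=;
  [exact: fn_mono | exact: finv_lt | exact: finv_lt].
Qed.

Lemma zpow_leE (f : aut) k : {mono zpow f k : x y / x <= y}.
Proof. exact/le_mono/zpow_lt. Qed.

Lemma zpow_ltE (f : aut) k : {mono zpow f k : x y / x < y}.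
Proof. exact/leW_mono/zpow_leE. Qed.

Lemma zpow_inv_aut (f : aut) k x : zpow (inv_aut f) k x = zpow f (- k) x.
Proof. by case: k => [[|n]|n]. Qed.

Lemma zpow_fixed (f : aut) a k : f a = a -> zpow f k a = a.
Proof.
move=> fa; have fia : finv f a = a by rewrite -{1}fa fnK.
by case: k => n /=; elim: n => [|n IH] //=; rewrite IH.
Qed.

Section OrbitalRelation.
Variable f : aut.

Lemma orb_rel_refl a : orb_rel f a a.
Proof. by exists 0, 0. Qed.

Lemma orb_rel_sym a b : orb_rel f a b -> orb_rel f b a.
Proof.
move=> [m [n [mb bn]]]; exists (- n), (- m); split.
  by rewrite -(zpowK f n a) zpow_leE.
by rewrite -(zpowK f m a) zpow_leE.
Qed.

Lemma orb_rel_trans a b c : orb_rel f a b -> orb_rel f b c -> orb_rel f a c.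
Proof.
move=> [m [n [mb bn]]] [m' [n' [mc cn]]]; exists (m' + m), (n' + n).
by rewrite !zpowD; split; [apply: le_trans mc | apply: le_trans cn _];
  rewrite zpow_leE.
Qed.

Lemma orb_rel_zpow a k : orb_rel f a (zpow f k a).
Proof. by exists k, k. Qed.

Lemma orb_rel_fn a : orb_rel f a (f a).
Proof. exact: (orb_rel_zpow a 1). Qed.

Lemma orb_rel_finv a : orb_rel f a (finv f a).
Proof. exact: (orb_rel_zpow a (-1)). Qed.

Lemma orb_rel_fixed a b : f a = a -> orb_rel f a b -> b = a.
Proof. by move=> fa [m [n]]; rewrite !zpow_fixed // => -[ab ba]; apply/le_anti/andP. Qed.

Lemma orb_rel_convex a x y z :
  orb_rel f a x -> orb_rel f a y -> x <= z -> z <= y -> orb_rel f a z.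
Proof.
move=> [m [_ [mx _]]] [_ [n [_ yn]]] xz zy.
by exists m, n; split; [apply: le_trans xz | apply: le_trans yn].
Qed.

Lemma orbital_of_eq a b : orb_rel f a b -> orbital_of f a = orbital_of f b.
Proof.
move=> ab; apply/seteqP; split => x /=; last exact: orb_rel_trans.
exact/orb_rel_trans/orb_rel_sym.
Qed.

Lemma orbital_of_meet a b x :
  orbital_of f a x -> orbital_of f b x -> orbital_of f a = orbital_of f b.
Proof. by move=> /orbital_of_eq -> /orbital_of_eq ->. Qed.

End OrbitalRelation.

Lemma orb_rel_agree (f1 f2 : aut) (X : set rat) :
    (forall x, X x -> f1 x = f2 x) ->
    (forall x, X x -> X (f1 x)) -> (forall x, X x -> X (finv f1 x)) ->
  forall x y, X x -> orb_rel f1 x y <-> orb_rel f2 x y.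
Proof.
move=> f12 Xf Xfinv x y Xx.
have finv12 z : X z -> finv f1 z = finv f2 z.
  by move=> Xz; apply: (@aut_inj f2); rewrite finvK -f12 ?finvK //; apply: Xfinv.
have zpow12 k : X (zpow f1 k x) /\ zpow f1 k x = zpow f2 k x.
  case: k => n /=; elim: n => [|n [Xn En]] /=.
  - by [].
  - by rewrite -En; split; [apply: Xf | rewrite f12].
  - by split; [apply: Xfinv | rewrite finv12].
  - by rewrite -En; split; [apply: Xfinv | rewrite finv12].
by split=> -[m [n mn]]; exists m, n; move: mn; rewrite (zpow12 m).2 (zpow12 n).2.
Qed.

Lemma orb_rel_conj (g g' h : aut) : (forall x, g (h x) = h (g' x)) ->
  forall x y, orb_rel g' x y -> orb_rel g (h x) (h y).
Proof.
move=> gh.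
have finv_gh x : finv g (h x) = h (finv g' x).
  by apply: (@aut_inj g); rewrite finvK gh finvK.
have zpow_gh k x : zpow g k (h x) = h (zpow g' k x).
  by case: k => n /=; elim: n => [|n IH] //=; rewrite ?IH ?gh ?finv_gh.
move=> x y [m [n mn]]; exists m, n.
by rewrite !zpow_gh !aut_leE.
Qed.

Lemma nontriv_orbitalsP (f : aut) O :
  nontriv_orbitals f O <-> exists2 a, f a <> a & O = orbital_of f a.
Proof.
split=> [[[a ->] [b [c [ab [ac bc]]]]]|[a fa ->]].
  by exists a => // fa; apply: bc; rewrite (orb_rel_fixed fa ab) (orb_rel_fixed fa ac).
split; first by exists a.
by exists a, (f a); do !split; [exact: orb_rel_refl | exact: orb_rel_fn | move/esym].
Qed.

Definition convex (C : set rat) :=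
  forall x y z, C x -> C y -> x <= z -> z <= y -> C z.
Definition no_max (C : set rat) := forall x, C x -> exists2 y, C y & x < y.
Definition no_min (C : set rat) := forall x, C x -> exists2 y, C y & y < x.
Definition has_two_points (C : set rat) := exists x y, [/\ C x, C y & x < y].

Lemma zpow_ltSE (f : aut) a k : (zpow f k a < zpow f (k + 1) a) = (a < f a).
Proof. by rewrite zpowD zpow_ltE. Qed.

Lemma zpow_gtSE (f : aut) a k : (zpow f (k + 1) a < zpow f k a) = (f a < a).
Proof. by rewrite zpowD zpow_ltE. Qed.

Lemma orbital_convex (f : aut) a : convex (orbital_of f a).
Proof. by move=> x y z; apply: orb_rel_convex. Qed.

Section MovedPoint.
Variables (f : aut) (a : rat).
Hypothesis fa : f a <> a.
Let O := orbital_of f a.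

Lemma zpow_neighbours k :
  exists k1 k2, zpow f k1 a < zpow f k a /\ zpow f k a < zpow f k2 a.
Proof.
have up := zpow_ltSE f a; have down := zpow_gtSE f a.
have [af|fa'|/esym//] := ltgtP a (f a).
  by exists (k - 1), (k + 1); rewrite -{2}(subrK 1 k) !up.
by exists (k + 1), (k - 1); rewrite -{3}(subrK 1 k) !down.
Qed.

Lemma orbital_no_max : no_max O.
Proof.
move=> x [m [n [_ xn]]]; have [_ [k [_ nk]]] := zpow_neighbours n.
by exists (zpow f k a); [apply: orb_rel_zpow | apply: le_lt_trans nk].
Qed.

Lemma orbital_no_min : no_min O.
Proof.
move=> x [m [n [mx _]]]; have [k [_ [km _]]] := zpow_neighbours m.
by exists (zpow f k a); [apply: orb_rel_zpow | apply: lt_le_trans mx].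
Qed.

Lemma orbital_has_two_points : has_two_points O.
Proof.
have [k1 [k2 [lt1 lt2]]] := zpow_neighbours 0.
by exists (zpow f k1 a), (zpow f k2 a); split; rewrite ?(lt_trans lt1 lt2) //;
  apply: orb_rel_zpow.
Qed.

End MovedPoint.

Definition precedes (A B : set rat) := forall x y, A x -> B y -> x < y.

Lemma convex_disjoint_precedes (A B : set rat) a b :
  convex A -> convex B -> (forall x, A x -> ~ B x) -> A a -> B b -> a < b ->
  precedes A B.
Proof.
move=> cA cB AB Aa Bb ab x y Ax By; rewrite ltNge; apply/negP => yx.
have [ay|ya] := leP a y; first exact: AB y (cA _ _ _ Aa Ax ay yx) By.
exact: AB a Aa (cB _ _ _ By Bb (ltW ya) (ltW ab)).
Qed.

Lemma orbital_of_precedes (f : aut) a b : orbital_of f a <> orbital_of f b ->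
  precedes (orbital_of f a) (orbital_of f b) \/
  precedes (orbital_of f b) (orbital_of f a).
Proof.
have disj c d : orbital_of f c <> orbital_of f d ->
    forall x, orbital_of f c x -> ~ orbital_of f d x.
  by move=> cd x cx dx; apply: cd; apply: orbital_of_meet cx dx.
move=> ab; have ba : orbital_of f b <> orbital_of f a by move/esym.
have [lt|gt|eq] := ltgtP a b; last by case: ab; rewrite eq.
  by left; apply: (convex_disjoint_precedes (@orbital_convex f a) (@orbital_convex f b) (disj _ _ ab) _ _ lt);
    apply: orb_rel_refl.
by right; apply: (convex_disjoint_precedes (@orbital_convex f b) (@orbital_convex f a) (disj _ _ ba) _ _ gt);
  apply: orb_rel_refl.
Qed.

Definition orbit_closed (f : aut) (W : set rat) :=
  forall x y, W x -> orb_rel f x y -> W y.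

Section Restrict.
Variables (f : aut) (W : set rat).
Hypothesis W_closed : orbit_closed f W.

Let fnW x := if `[< W x >] then f x else x.
Let finvW x := if `[< W x >] then finv f x else x.

Let fnWK : cancel fnW finvW.
Proof.
move=> x; rewrite /fnW /finvW; case: (asboolP (W x)) => [Wx|]; last by case: asboolP.
by rewrite asboolT ?fnK //; apply: W_closed Wx (orb_rel_fn _ _).
Qed.

Let finvWK : cancel finvW fnW.
Proof.
move=> x; rewrite /fnW /finvW; case: (asboolP (W x)) => [Wx|]; last by case: asboolP.
by rewrite asboolT ?finvK //; apply: W_closed Wx (orb_rel_finv _ _).
Qed.

Let fnW_lt : {homo fnW : x y / x < y}.
Proof.
move=> x y xy; rewrite /fnW; case: (asboolP (W x)) => Wx; case: (asboolP (W y)) => Wy //.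
- exact: fn_mono.
- rewrite ltNge; apply/negP => yfx; apply: Wy; apply: W_closed Wx _.
  by exists 0, 1; split; [exact: ltW|].
- rewrite ltNge; apply/negP => fyx; apply: Wx; apply: W_closed Wy _.
  by exists 1, 0; split; [|exact: ltW].
Qed.

Definition restrict : aut := locked (Aut fnWK finvWK fnW_lt).

Lemma restrict_in x : W x -> restrict x = f x.
Proof. by rewrite /restrict -lock /= /fnW => Wx; rewrite asboolT. Qed.

Lemma restrict_out x : ~ W x -> restrict x = x.
Proof. by rewrite /restrict -lock /= /fnW => Wx; rewrite asboolF. Qed.

Lemma supp_restrict x : supp restrict x -> W x.
Proof. by apply: contra_notP => /restrict_out. Qed.

Lemma restrict_orbital x : W x -> orbital_of restrict x = orbital_of f x.
Proof.
move=> Wx; have E y : orb_rel f x y <-> orb_rel restrict x y.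
  apply: (orb_rel_agree (X := W)) => // [z Wz|z Wz|z Wz].
  - by rewrite restrict_in.
  - exact: W_closed Wz (orb_rel_fn _ _).
  - exact: W_closed Wz (orb_rel_finv _ _).
by apply/seteqP; split=> y /E.
Qed.

Lemma restrict_restriction : restriction restrict f.
Proof.
by split=> x /[dup] /supp_restrict Wx; rewrite /supp /= restrict_in.
Qed.

End Restrict.

Lemma restrict_sub_restriction (f : aut) (V W : set rat)
    (V_closed : orbit_closed f V) (W_closed : orbit_closed f W) :
  V `<=` W -> restriction (restrict V_closed) (restrict W_closed).
Proof.
move=> VW; split=> x /[dup] /supp_restrict Vx; have Wx := VW x Vx.
  by rewrite /supp /= !restrict_in.
by rewrite /supp /= !restrict_in.
Qed.

Lemma restrict_bump (f : aut) a (O_closed : orbit_closed f (orbital_of f a)) :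
  f a <> a -> is_bump (restrict O_closed).
Proof.
move=> fa; have Oa : orbital_of f a a := orb_rel_refl _ _.
split; first by exists a; rewrite restrict_in.
exists (orbital_of f a); apply/seteqP; split=> O /=.
  move=> /nontriv_orbitalsP [x /[dup] /supp_restrict Ox _ ->].
  by rewrite restrict_orbital // -(orbital_of_eq Ox).
move=> ->; apply/nontriv_orbitalsP; exists a; first by rewrite restrict_in.
by rewrite restrict_orbital.
Qed.

Lemma supp_fn (g : aut) x : supp g x -> supp g (g x).
Proof. by move=> gx /(@aut_inj g). Qed.

Lemma supp_finv (g : aut) x : supp g x -> supp g (finv g x).
Proof. by move=> gx E; apply: gx; rewrite finvK in E; rewrite {1}E finvK. Qed.

Lemma restriction_orb_rel (g f : aut) : restriction g f ->
  forall x y, supp g x -> orb_rel g x y <-> orb_rel f x y.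
Proof. by move=> [_ gf]; apply: orb_rel_agree => // [x /supp_fn | x /supp_finv]. Qed.

Section OrbitalFactor.
Variables g g1 g2 : aut.
Hypotheses (g1g : restriction g1 g) (g_prod : is_prod g g1 g2).
Let A := supp g1.

Lemma factor_fixed x : A x -> g2 x = x.
Proof. by move=> Ax; apply: (@aut_inj g1); rewrite -g_prod g1g.2. Qed.

Lemma factor_fn_out x : ~ A x -> ~ A (g x).
Proof.
move=> Ax Agx; apply: Ax.
have <- : finv g1 (g x) = x.
  by apply: (@aut_inj g); rewrite -g1g.2 ?finvK //; apply: supp_finv.
exact: supp_finv.
Qed.

Lemma factor_finv_out x : ~ A x -> ~ A (finv g x).
Proof.
by move=> Ax Afx; apply: Ax; rewrite -(finvK g x) -g1g.2 //; apply: supp_fn.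
Qed.

Lemma factor_out x : ~ A x -> g2 x = g x.
Proof.
move=> Ax; apply: (@aut_inj g1); rewrite -g_prod.
by apply: esym; apply: contrapT; exact: (factor_fn_out Ax).
Qed.

Lemma factor_orb_rel x : ~ A x -> forall y, orb_rel g x y <-> orb_rel g2 x y.
Proof.
move=> Ax y; apply: (orb_rel_agree (X := fun z => ~ A z)) => // z.
- by move=> /factor_out ->.
- exact: factor_fn_out.
- exact: factor_finv_out.
Qed.

End OrbitalFactor.

Lemma conj_factor_orbitals (g g1 g2 h : aut) a :
    restriction g1 g -> is_prod g g1 g2 -> (forall x, g (h x) = h (g2 x)) ->
    supp g1 a ->
  exists b : nat -> rat,
    (forall n, supp g (b n)) /\ (forall i j, orb_rel g (b i) (b j) -> i = j).
Proof.
move=> g1g g_prod gh g1a; pose b n := iter n (finv h) a.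
have hb n : h (b n.+1) = b n by rewrite /= finvK.
have step n : supp g (b n) -> ~ supp g1 (b n.+1) /\ supp g (b n.+1).
  move=> gb; have g2b : supp g2 (b n.+1).
    by move=> E; apply: gb; rewrite -hb gh E.
  have out : ~ supp g1 (b n.+1) by move/(factor_fixed g1g g_prod).
  by split=> // E; apply: g2b; rewrite (factor_out g1g g_prod out).
have moved n : supp g (b n).
  by elim: n => [|n /step []//]; apply: g1g.1.
have out n := (step n (moved n)).1.
have orb0 j : ~ orb_rel g a (b j.+1).
  move=> /orb_rel_sym /(factor_orb_rel g1g g_prod (out j)) /orb_rel_sym.
  by move=> /(orb_rel_fixed (factor_fixed g1g g_prod g1a)) E; apply: (out j); rewrite E.
exists b; split=> //; elim=> [|i IH] [|j] //.
- by move/orb0.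
- by move/orb_rel_sym/orb0.
move=> /(factor_orb_rel g1g g_prod (out i)) /(orb_rel_conj gh).
by rewrite !hb => /IH ->.
Qed.

Lemma infinite_set_inj T (S : set T) (u : nat -> T) :
  (forall n, S (u n)) -> injective u -> infinite_set S.
Proof.
move=> Su u_inj finS.
have : finite_set (u @^-1` S) by apply: finite_preimage => // i j _ _; apply: u_inj.
have -> : u @^-1` S = setT by apply/seteqP; split => // n _; apply: Su.
exact: infinite_nat.
Qed.

Lemma factorization_infinite_orbitals (f : aut) :
  (exists g g1 g2 : aut,
      restriction g f /\ orbital_elt g1 g /\ is_prod g g1 g2 /\ conjugate g g2) ->
  infinite_set (nontriv_orbitals f).
Proof.
move=> [g [g1 [g2 [gf [[[[a g1a] _] g1g] [g_prod [h gh]]]]]]].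
have [b [moved b_inj]] := conj_factor_orbitals g1g g_prod gh g1a.
apply: (@infinite_set_inj _ _ (fun n => orbital_of f (b n))) => [n|i j E].
  by apply/nontriv_orbitalsP; exists (b n) => //; apply: gf.1 (moved n).
apply: b_inj; apply/(restriction_orb_rel gf) => //.
by have : orbital_of f (b j) (b j) := orb_rel_refl _ _; rewrite -E.
Qed.

Record order_iso (C D : set rat) (p q : rat -> rat) : Prop := OrderIso {
  order_iso_into : forall x, C x -> D (p x);
  order_iso_inv_into : forall y, D y -> C (q y);
  order_isoK : forall x, C x -> q (p x) = x;
  order_iso_invK : forall y, D y -> p (q y) = y;
  order_iso_lt : forall x y, C x -> C y -> x < y -> p x < p y }.

Definition isomorphic (C D : set rat) := exists p q, order_iso C D p q.

Lemma order_iso_comp C D E p q p' q' : order_iso C D p q -> order_iso D E p' q' ->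
  order_iso C E (p' \o p) (q \o q').
Proof.
move=> [pD qC pK qK p_lt] [p'E q'D p'K q'K p'_lt]; split=> /=.
- by move=> x /pD /p'E.
- by move=> x /q'D /qC.
- by move=> x Cx; rewrite p'K ?pK //; apply: pD.
- by move=> x Ex; rewrite qK ?q'K //; apply: q'D.
- by move=> x y Cx Cy xy; apply: p'_lt; [apply: pD | apply: pD | apply: p_lt].
Qed.

Lemma order_iso_set1 a b : order_iso [set a] [set b] (fun=> b) (fun=> a).
Proof. by split=> // x y -> ->; rewrite ltxx. Qed.

Lemma order_iso_bigcup (I : Type) (P Q : I -> set rat) (p q : I -> rat -> rat) :
    (forall i, order_iso (P i) (Q i) (p i) (q i)) ->
    (forall i j x, P i x -> P j x -> i = j) ->
    (forall i j x y, i <> j -> P i x -> P j y -> x < y -> p i x < p j y) ->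
  exists p' q', order_iso (\bigcup_i P i) (\bigcup_i Q i) p' q' /\
    forall i x, P i x -> p' x = p i x.
Proof.
move=> isoP P_disj p_lt.
have Q_disj i j y : Q i y -> Q j y -> i = j.
  move=> Qiy Qjy; have [_ Pq _ pq _] := isoP i; have [_ Pq' _ pq' _] := isoP j.
  have [//|ij] := pselect (i = j); apply: (P_disj _ _ (q i y)) (Pq _ Qiy) _.
  have [lt|gt|->] := ltgtP (q i y) (q j y); last exact: Pq'.
    by have := p_lt _ _ _ _ ij (Pq _ Qiy) (Pq' _ Qjy) lt; rewrite pq // pq' // ltxx.
  by have := p_lt _ _ _ _ (nesym ij) (Pq' _ Qjy) (Pq _ Qiy) gt; rewrite pq // pq' // ltxx.
pose p' x := if pselect (exists i, P i x) is left h then p (projT1 (cid h)) x else x.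
pose q' y := if pselect (exists i, Q i y) is left h then q (projT1 (cid h)) y else y.
have p'E i x : P i x -> p' x = p i x.
  move=> Pix; rewrite /p'; case: pselect => [h|[]]; last by exists i.
  by case: (cid h) => j /= Pjx; rewrite (P_disj _ _ _ Pjx Pix).
have q'E i y : Q i y -> q' y = q i y.
  move=> Qiy; rewrite /q'; case: pselect => [h|[]]; last by exists i.
  by case: (cid h) => j /= Qjy; rewrite (Q_disj _ _ _ Qjy Qiy).
exists p', q'; split=> //; split.
- by move=> x [i _ Pix]; rewrite (p'E _ _ Pix); exists i => //; apply: (order_iso_into (isoP i)).
- by move=> y [i _ Qiy]; rewrite (q'E _ _ Qiy); exists i => //; apply: (order_iso_inv_into (isoP i)).
- move=> x [i _ Pix]; rewrite (p'E _ _ Pix) (q'E i) ?(order_isoK (isoP i)) //.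
  exact: (order_iso_into (isoP i)).
- move=> y [i _ Qiy]; rewrite (q'E _ _ Qiy) (p'E i) ?(order_iso_invK (isoP i)) //.
  exact: (order_iso_inv_into (isoP i)).
- move=> x y [i _ Pix] [j _ Pjy] xy; rewrite (p'E _ _ Pix) (p'E _ _ Pjy).
  have [ij|ij] := pselect (i = j); last exact: p_lt.
  by subst j; apply: (order_iso_lt (isoP i)).
Qed.

Lemma order_iso_setU X Y X' Y' p q p' q' :
    order_iso X Y p q -> order_iso X' Y' p' q' -> precedes X X' -> precedes Y Y' ->
  exists p'' q'', order_iso (X `|` X') (Y `|` Y') p'' q'' /\
    (forall x, X x -> p'' x = p x) /\ (forall x, X' x -> p'' x = p' x).
Proof.
move=> isoX isoX' XX' YY'.
pose P (b : bool) := if b then X else X'.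
pose Q (b : bool) := if b then Y else Y'.
have UE Z Z' : Z `|` Z' = \bigcup_b (if b then Z else Z').
  by apply/seteqP; split=> [x [Zx|Zx]|x [[] _ Zx]]; by [exists true | exists false | left | right].
have [|||p'' [q'' [iso E]]] := @order_iso_bigcup _ P Q
    (fun b => if b then p else p') (fun b => if b then q else q').
- by case.
- move=> [] [] x //= Px P'x.
    by have := XX' x x Px P'x; rewrite ltxx.
  by have := XX' x x P'x Px; rewrite ltxx.
- move=> [] [] x y //= _ Px P'y xy.
    by apply: YY'; [apply: (order_iso_into isoX) | apply: (order_iso_into isoX')].
  by have := lt_trans xy (XX' _ _ P'y Px); rewrite ltxx.
by exists p'', q''; rewrite !UE; split=> //; split=> x Px; [apply: (E true) | apply: (E false)].
Qed.

Definition aut_of_order_iso p q (iso : order_iso setT setT p q) : aut :=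
  Aut (fun x => order_isoK iso I) (fun y => order_iso_invK iso I)
      (fun x y => order_iso_lt iso I I).

Definition ico (u v : rat) : set rat := [set x | u <= x < v].

Lemma order_iso_zpow (f : aut) k u v :
  order_iso (ico u v) (ico (zpow f k u) (zpow f k v)) (zpow f k) (zpow f (- k)).
Proof.
split=> [x|y /andP[uy yv]|x _|y _|x y _ _]; rewrite ?zpowK ?zpowNK ?zpow_ltE //.
  by rewrite /ico /= zpow_leE zpow_ltE.
by apply/andP; rewrite -(zpow_leE f k) -(zpow_ltE f k) zpowNK.
Qed.

Definition affine (u v u' v' x : rat) := u' + (x - u) * ((v' - u') / (v - u)).

Lemma order_iso_affine u v u' v' : u < v -> u' < v' ->
  order_iso (ico u v) (ico u' v') (affine u v u' v') (affine u' v' u v).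
Proof.
have slope_gt0 a b a' b' : a < b -> a' < b' -> 0 < (b' - a') / (b - a).
  by move=> ab ab'; rewrite divr_gt0 // subr_gt0.
have affine_ltE a b a' b' : a < b -> a' < b' -> {mono affine a b a' b' : x y / x < y}.
  by move=> ab ab' x y; rewrite ltrD2l ltr_pM2r ?slope_gt0 ?ltrD2r.
have affine_leE a b a' b' : a < b -> a' < b' -> {mono affine a b a' b' : x y / x <= y}.
  by move=> ab ab' x y; rewrite lerD2l ler_pM2r ?slope_gt0 ?lerD2r.
have affine_into a b a' b' : a < b -> a' < b' ->
    forall x, ico a b x -> ico a' b' (affine a b a' b' x).
  move=> ab ab' x; have Ea : affine a b a' b' a = a' by rewrite /affine subrr mul0r addr0.
  have Eb : affine a b a' b' b = b' by rewrite /affine; field; rewrite subr_eq0 gt_eqF.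
  move=> /andP[ax xb]; apply/andP; split.
    by rewrite -(affine_leE a b a' b') // Ea in ax.
  by rewrite -(affine_ltE a b a' b') // Eb in xb.
move=> uv uv'; split; [exact: affine_into | exact: affine_into | | |].
- by move=> x _; rewrite /affine; field; rewrite !subr_eq0 !gt_eqF.
- by move=> y _; rewrite /affine; field; rewrite !subr_eq0 !gt_eqF.
- by move=> x y _ _; rewrite affine_ltE.
Qed.

Definition incr (s : int -> rat) := forall k, s k < s (k + 1).

Section IncreasingSequence.
Variable s : int -> rat.
Hypothesis s_incr : incr s.

Lemma incr_lt : {homo s : i j / i < j}.
Proof.
move=> i j ij; have -> : j = i + `|j - i|%N by lia.
have := @homo_ltn _ (fun n : nat => s (i + n%:Z)) _ (@lt_trans _ _) _ 0%N `|j - i|%N.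
rewrite addr0; apply; last by lia.
by move=> n; rewrite -addn1 PoszD addrA.
Qed.

Lemma incr_leE : {mono s : i j / i <= j}.
Proof. exact/le_mono/incr_lt. Qed.

Lemma incr_ltE : {mono s : i j / i < j}.
Proof. exact/leW_mono/incr_leE. Qed.

Let piece k := ico (s k) (s (k + 1)).

Lemma incr_piece x j k : s j <= x -> x < s k -> exists i, piece i x.
Proof.
move=> jx xk; have jk : j < k by rewrite -incr_ltE (le_lt_trans jx xk).
move: xk; have -> : k = j + `|k - j|%N by lia.
elim: `|k - j|%N => [|n IH] xk; first by have := le_lt_trans jx xk; rewrite addr0 ltxx.
have [lt|ge] := ltP x (s (j + n%:Z)); first exact: IH.
by exists (j + n%:Z); rewrite /piece /ico /= ge -addrA -PoszD addn1.
Qed.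

Lemma incr_piece_lt i j x y : piece i x -> piece j y -> x < y -> (i <= j)%R.
Proof.
move=> /andP[ix _] /andP[_ jy] xy.
by rewrite -ltzD1 -incr_ltE (le_lt_trans ix (lt_trans xy jy)).
Qed.

Lemma incr_piece_disj i j x : piece i x -> piece j x -> i = j.
Proof.
move=> /[dup] /andP[ix xi] ipx /[dup] /andP[jx xj] jpx.
apply/le_anti; rewrite -!ltzD1 -!incr_ltE.
by rewrite (le_lt_trans ix xj) (le_lt_trans jx xi).
Qed.

End IncreasingSequence.

Lemma order_iso_incr s t p q : incr s -> incr t ->
    (forall k, order_iso (ico (s k) (s (k + 1))) (ico (t k) (t (k + 1))) (p k) (q k)) ->
  exists p' q', order_iso (\bigcup_k ico (s k) (s (k + 1)))
                          (\bigcup_k ico (t k) (t (k + 1))) p' q' /\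
    forall k x, ico (s k) (s (k + 1)) x -> p' x = p k x.
Proof.
move=> s_incr t_incr iso; apply: order_iso_bigcup => // [i j x|i j x y ij xi yj xy].
  exact: incr_piece_disj.
have lt_ij : i < j.
  by rewrite lt_neqAle (incr_piece_lt s_incr xi yj xy) andbT; apply/eqP.
have /andP[_ pix] := order_iso_into (iso i) xi.
have /andP[pjy _] := order_iso_into (iso j) yj.
by apply: lt_le_trans pix (le_trans _ pjy); rewrite incr_leE // lezD1.
Qed.

Lemma cofinal_seq (C : set rat) c0 : C c0 -> no_max C ->
  exists u : nat -> rat, [/\ u 0%N = c0, forall n, C (u n),
    forall n, u n < u n.+1 & forall x, C x -> exists n, x < u n].
Proof.
move=> Cc0 C_nomax.
have /choice [up upP] : forall x, exists y, C x -> C y /\ x < y.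
  move=> x; have [Cx|nCx] := pselect (C x); last by exists x.
  by have [y Cy xy] := C_nomax x Cx; exists y.
pose enum n : rat := odflt 0 (unpickle n).
pose next n w := if `[< C (enum n) >] then Num.max w (enum n) else w.
have next_in n w : C w -> C (next n w).
  by rewrite /next; case: asboolP => // Ce Cw; case: leP.
have next_ge n w : w <= next n w.
  by rewrite /next; case: asboolP => // _; rewrite le_max lexx.
pose u := fix u n := if n is m.+1 then up (next m (u m)) else c0.
have Cu n : C (u n) by elim: n => [|n IH] //=; case: (upP _ (next_in n _ IH)).
exists u; split=> // [n|x Cx].
  by apply: le_lt_trans (next_ge n _) (upP _ (next_in _ _ (Cu n))).2.
exists (pickle x).+1; apply: le_lt_trans (upP _ (next_in _ _ (Cu _))).2.
by rewrite /next /enum pickleK /=; case: asboolP => // _; rewrite le_max lexx orbT.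
Qed.

Lemma coinitial_seq (C : set rat) c0 : C c0 -> no_min C ->
  exists v : nat -> rat, [/\ v 0%N = c0, forall n, C (v n),
    forall n, v n.+1 < v n & forall x, C x -> exists n, v n < x].
Proof.
move=> Cc0 C_nomin.
have [||u [u0 Cu u_incr u_cof]] := @cofinal_seq (-%R @^-1` C) (- c0).
- by rewrite /= opprK.
- by move=> x /C_nomin [y Cy yx]; exists (- y); rewrite /= ?opprK // ltrNr.
exists (fun n => - u n); split=> // [|n|x Cx]; first by rewrite u0 opprK.
  by rewrite ltrN2.
have [|n xn] := u_cof (- x); first by rewrite /= opprK.
by exists n; rewrite ltrNl.
Qed.

Lemma convex_scaffold (C : set rat) c0 : convex C -> C c0 -> no_max C -> no_min C ->
  exists s, incr s /\ C = \bigcup_k ico (s k) (s (k + 1)).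
Proof.
move=> C_cvx Cc0 C_nomax C_nomin.
have [u [u0 Cu u_incr u_cof]] := cofinal_seq Cc0 C_nomax.
have [v [v0 Cv v_decr v_cof]] := coinitial_seq Cc0 C_nomin.
pose s k := if k is Negz n then v n.+1 else u `|k|%N.
have sN m : s (- m%:Z) = v m by case: m => [|m] /=; rewrite ?u0 ?v0.
have s_incr : incr s.
  case=> [n|[|n]] /=.
  - by rewrite addn1; apply: u_incr.
  - by rewrite u0 -v0; apply: v_decr.
  - by rewrite subn1; apply: v_decr.
have Cs k : C (s k) by case: k => n; [apply: Cu | apply: Cv].
exists s; split=> //; apply/seteqP; split=> [x Cx|x [k _ /andP[skx xsk]]].
  have [n xn] := u_cof x Cx; have [m mx] := v_cof x Cx.
  have mx' : s (- m%:Z) <= x by rewrite sN ltW.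
  by have [i xi] := incr_piece s_incr mx' (xn : x < s n); exists i.
exact: C_cvx (Cs k) (Cs (k + 1)) skx (ltW xsk).
Qed.

Lemma isomorphic_open_convex (C D : set rat) :
    convex C -> C !=set0 -> no_max C -> no_min C ->
    convex D -> D !=set0 -> no_max D -> no_min D ->
  isomorphic C D.
Proof.
move=> C_cvx [c Cc] C_nomax C_nomin D_cvx [d Dd] D_nomax D_nomin.
have [s [s_incr ->]] := convex_scaffold C_cvx Cc C_nomax C_nomin.
have [t [t_incr ->]] := convex_scaffold D_cvx Dd D_nomax D_nomin.
have [p [q [iso _]]] := order_iso_incr s_incr t_incr
  (fun k => order_iso_affine (s_incr k) (t_incr k)).
by exists p, q.
Qed.

Lemma isomorphic_setU_point X Y A B :
    isomorphic X Y -> is_subset1 A -> is_subset1 B -> (A !=set0 <-> B !=set0) ->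
    precedes A X /\ precedes B Y \/ precedes X A /\ precedes Y B ->
  isomorphic (X `|` A) (Y `|` B).
Proof.
move=> [p [q iso]] A1 B1 AB ends.
have [[a Aa]|/nonemptyPn A0] := pselect (A !=set0); last first.
  have /nonemptyPn B0 : ~ (B !=set0) by rewrite -AB A0 => -[].
  by rewrite A0 B0 !setU0; exists p, q.
have [b Bb] := AB.1 (ex_intro _ a Aa).
have set1E (Z : set rat) z : is_subset1 Z -> Z z -> Z = [set z].
  by move=> Z1 Zz; apply/seteqP; split=> [x Zx|x ->] //; apply: Z1.
rewrite (set1E _ _ A1 Aa) (set1E _ _ B1 Bb) in ends *.
case: ends => [[AX BY]|[XA YB]].
  have [p' [q' [iso' _]]] := order_iso_setU (order_iso_set1 a b) iso AX BY.
  by rewrite setUC [Y `|` _]setUC; exists p', q'.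
have [p' [q' [iso' _]]] := order_iso_setU iso (order_iso_set1 a b) XA YB.
by exists p', q'.
Qed.

Definition interior (C : set rat) :=
  [set x | exists y z, [/\ C y, C z, y < x & x < z]].

Lemma interior_convex C : convex (interior C).
Proof.
move=> x y z [a [_ [Ca _ ax _]]] [_ [b [_ Cb _ yb]]] xz zy.
by exists a, b; split; [| | apply: lt_le_trans xz | apply: le_lt_trans yb].
Qed.

Lemma interior_no_max C : no_max (interior C).
Proof.
move=> x [y [z [Cy Cz yx xz]]]; have [xm mz] := midf_lt xz.
by exists ((x + z) / 2) => //; exists y, z; split=> //; apply: lt_trans xm.
Qed.

Lemma interior_no_min C : no_min (interior C).
Proof.
move=> x [y [z [Cy Cz yx xz]]]; have [ym mx] := midf_lt yx.
by exists ((y + x) / 2) => //; exists y, z; split=> //; apply: lt_trans xz.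
Qed.

Lemma interior_nonempty C : has_two_points C -> interior C !=set0.
Proof. by move=> [y [z [Cy Cz /midf_lt [ym mz]]]]; exists ((y + z) / 2), y, z. Qed.

Lemma convex_decomp C : convex C ->
  C = (interior C `|` (C `&` lbound C)) `|` (C `&` ubound C).
Proof.
move=> C_cvx; apply/seteqP; split=> [x Cx|x [[[y [z [Cy Cz /ltW yx /ltW xz]]]|[]//]|[]//]].
  have [[y Cy yx]|noy] := pselect (exists2 y, C y & y < x).
    have [[z Cz xz]|noz] := pselect (exists2 z, C z & x < z).
      by left; left; exists y, z.
    by right; split=> // z Cz; rewrite leNgt; apply/negP => xz; apply: noz; exists z.
  by left; right; split=> // z Cz; rewrite leNgt; apply/negP => zx; apply: noy; exists z.
exact: C_cvx Cy Cz yx xz.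
Qed.

Lemma isomorphic_convex C D : convex C -> convex D ->
    has_two_points C -> has_two_points D ->
    (C `&` lbound C !=set0 <-> D `&` lbound D !=set0) ->
    (C `&` ubound C !=set0 <-> D `&` ubound D !=set0) ->
  isomorphic C D.
Proof.
move=> C_cvx D_cvx C2 D2 minCD maxCD.
have lb1 (E : set rat) : is_subset1 (E `&` lbound E).
  by move=> x y [Ex xE] [Ey yE]; apply/le_anti; rewrite xE ?yE.
have ub1 (E : set rat) : is_subset1 (E `&` ubound E).
  by move=> x y [Ex xE] [Ey yE]; apply/le_anti; rewrite xE ?yE.
have min_first E : precedes (E `&` lbound E) (interior E).
  by move=> m x [_ mE] [y [_ [Ey _ yx _]]]; apply: le_lt_trans (mE _ Ey) yx.
have max_last E : has_two_points E ->
    precedes (interior E `|` (E `&` lbound E)) (E `&` ubound E).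
  move=> [a [b [Ea Eb ab]]] x M [[y [z [_ Ez _ xz]]]|[_ xE]] [_ ME].
    exact: lt_le_trans xz (ME _ Ez).
  exact: le_lt_trans (xE _ Ea) (lt_le_trans ab (ME _ Eb)).
have iso0 : isomorphic (interior C) (interior D).
  by apply: isomorphic_open_convex; first [exact: interior_convex |
    exact: interior_no_max | exact: interior_no_min | exact: interior_nonempty].
have iso1 := isomorphic_setU_point iso0 (lb1 C) (lb1 D) minCD
  (or_introl (conj (min_first C) (min_first D))).
have iso2 := isomorphic_setU_point iso1 (ub1 C) (ub1 D) maxCD
  (or_intror (conj (max_last C C2) (max_last D D2))).
by rewrite (convex_decomp C_cvx) (convex_decomp D_cvx).
Qed.

Definition gap (A B : set rat) :=
  [set x | (forall y, A y -> y < x) /\ (forall y, B y -> x < y)].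

Lemma gap_convex A B : convex (gap A B).
Proof.
move=> x y z [Ax _] [_ yB] xz zy.
by split=> w => [/Ax /lt_le_trans|/yB]; [apply | apply: le_lt_trans].
Qed.

Lemma no_max_ubound_lt (A : set rat) x y : no_max A -> ubound A y -> A x -> x < y.
Proof. by move=> A_nomax Ay /A_nomax [z Az xz]; apply: lt_le_trans xz (Ay _ Az). Qed.

Lemma no_min_lbound_lt (B : set rat) x y : no_min B -> lbound B y -> B x -> y < x.
Proof. by move=> B_nomin By /B_nomin [z Bz zx]; apply: le_lt_trans (By _ Bz) zx. Qed.

Section Gap.
Variables A B : set rat.
Hypotheses (A_nomax : no_max A) (B_nomin : no_min B) (AB : precedes A B).

Lemma gap_min : gap A B `&` lbound (gap A B) !=set0 <-> supremums A !=set0.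
Proof.
split=> [[m [[Am mB] mgap]]|[r [Ar rA]]].
  exists m; split=> [x /Am /ltW //|y Ay]; rewrite leNgt; apply/negP => ym.
  have : gap A B y by split=> [x /(no_max_ubound_lt A_nomax Ay)|b /mB]; last apply: lt_trans.
  by move/mgap; rewrite leNgt ym.
have r_gap : gap A B r.
  split=> [x|b Bb]; first exact: no_max_ubound_lt.
  apply: (no_min_lbound_lt B_nomin) Bb => b' Bb'.
  by apply: rA => a Aa; apply/ltW/AB.
by exists r; split=> // x [Ax _]; apply: rA => a /Ax /ltW.
Qed.

Lemma gap_max : gap A B `&` ubound (gap A B) !=set0 <-> infimums B !=set0.
Proof.
split=> [[m [[Am mB] mgap]]|[r [Br rB]]].
  exists m; split=> [x /mB /ltW //|y By]; rewrite leNgt; apply/negP => my.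
  have : gap A B y by split=> [a /Am /lt_trans|x /(no_min_lbound_lt B_nomin By)]; first apply.
  by move/mgap; rewrite leNgt my.
have r_gap : gap A B r.
  split=> [a Aa|x]; last exact: no_min_lbound_lt.
  apply: (no_max_ubound_lt A_nomax) Aa => a' Aa'.
  by apply: rB => b Bb; apply/ltW/AB.
by exists r; split=> // x [_ xB]; apply: rB => b /xB /ltW.
Qed.

End Gap.

Lemma orbital_of_inv_aut (f : aut) a : orbital_of (inv_aut f) a = orbital_of f a.
Proof.
apply/seteqP; split=> x [m [n]]; rewrite ?zpow_inv_aut => mn.
  by exists (- m), (- n).
by exists (- m), (- n); rewrite !zpow_inv_aut !opprK.
Qed.

Lemma orbital_cover (f : aut) a : a < f a ->
  orbital_of f a = \bigcup_k ico (zpow f k a) (zpow f (k + 1) a).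
Proof.
move=> af; have s_incr : incr (zpow f ^~ a) by move=> k; rewrite zpow_ltSE.
apply/seteqP; split=> [x [m [n [mx xn]]]|x [k _ /andP[kx xk]]].
  by have [k xk] := incr_piece s_incr mx (le_lt_trans xn (s_incr n)); exists k.
by exists k, (k + 1); split=> //; apply: ltW.
Qed.

Lemma orbital_conj_up (f g : aut) a b : a < f a -> b < g b ->
  exists p q, order_iso (orbital_of f a) (orbital_of g b) p q /\
    forall x, orbital_of f a x -> p (f x) = g (p x).
Proof.
move=> af bg; pose s k := zpow f k a; pose t k := zpow g k b.
pose p k := zpow g k \o affine a (f a) b (g b) \o zpow f (- k).
pose q k := zpow f (- - k) \o affine b (g b) a (f a) \o zpow g (- k).
have piece_iso k : order_iso (ico (s k) (s (k + 1))) (ico (t k) (t (k + 1))) (p k) (q k).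
  have iso1 := order_iso_zpow f (- k) (s k) (s (k + 1)).
  rewrite /s zpowK -zpowD addKr in iso1.
  have iso3 := order_iso_zpow g k b (g b).
  rewrite -[g b]/(zpow g 1 b) -zpowD in iso3.
  exact: order_iso_comp (order_iso_comp iso1 (order_iso_affine af bg)) iso3.
have s_incr : incr s by move=> k; rewrite /s zpow_ltSE.
have t_incr : incr t by move=> k; rewrite /t zpow_ltSE.
have [p' [q' [iso p'E]]] := order_iso_incr s_incr t_incr piece_iso.
exists p', q'; rewrite orbital_cover // orbital_cover //; split=> // x [k _ xk].
have fxk : ico (s (k + 1)) (s (k + 1 + 1)) (f x).
  by move: xk; rewrite /s /ico /= !zpowD1 aut_leE aut_ltE.
rewrite (p'E _ _ fxk) (p'E _ _ xk) /p /= -[f x]/(zpow f 1 x) -zpowD.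
by rewrite zpowD1 opprD addrNK.
Qed.

Lemma orbital_conj (f g : aut) a b : f a <> a -> g b <> b -> (a < f a) = (b < g b) ->
  exists p q, order_iso (orbital_of f a) (orbital_of g b) p q /\
    forall x, orbital_of f a x -> p (f x) = g (p x).
Proof.
move=> fa gb dir; have [af|fa'|/esym//] := ltgtP a (f a).
  by apply: orbital_conj_up; rewrite -?dir.
have gb' : g b < b.
  have [bg|//|/esym//] := ltgtP b (g b).
  by rewrite -dir in bg; have := lt_trans bg fa'; rewrite ltxx.
have [||p [q [iso conj]]] := @orbital_conj_up (inv_aut f) (inv_aut g) a b.
- by rewrite -(aut_ltE f) finvK.
- by rewrite -(aut_ltE g) finvK.
rewrite !orbital_of_inv_aut in iso conj.
exists p, q; split=> // x Ox.
have /= := conj _ (orb_rel_trans Ox (orb_rel_fn _ _)); rewrite fnK => ->.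
by rewrite finvK.
Qed.

Section Construction.
Variables (f : aut) (a : nat -> rat).
Hypothesis moved : forall n, f (a n) <> a n.
Hypothesis adjacent : forall n, precedes (orbital_of f (a n)) (orbital_of f (a n.+1)).
Hypothesis same_dir : forall n, (a n < f (a n)) = (a 0%N < f (a 0%N)).
Hypothesis same_sup : forall n,
  supremums (orbital_of f (a n)) !=set0 <-> supremums (orbital_of f (a 0%N)) !=set0.
Hypothesis same_inf : forall n,
  infimums (orbital_of f (a n)) !=set0 <-> infimums (orbital_of f (a 0%N)) !=set0.

Let O n := orbital_of f (a n).

Lemma O_precedes i j : (i < j)%N -> precedes (O i) (O j).
Proof.
elim: j => // j IH; rewrite ltnS leq_eqVlt => /orP[/eqP->|/IH ij x y Ox Oy].
  exact: adjacent.
exact: lt_trans (ij _ _ Ox (orb_rel_refl _ _)) (adjacent (orb_rel_refl _ _) Oy).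
Qed.

Let A n := O n.*2.+1.

Lemma A_precedes i j : (i < j)%N -> precedes (A i) (A j).
Proof. by move=> ij; apply: O_precedes; rewrite ltnS ltn_double. Qed.

Lemma A_point n : A n (a n.*2.+1).
Proof. exact: orb_rel_refl. Qed.

Lemma A_fn n x : A n x -> A n (f x).
Proof. by move=> Ax; apply: orb_rel_trans Ax (orb_rel_fn _ _). Qed.

Lemma A_below n m x : A n x -> (forall y, A m y -> x < y) -> (n < m)%N.
Proof.
move=> Ax xA; rewrite ltnNge leq_eqVlt; apply/negP => /orP[/eqP mn|mn].
  by have := xA x; rewrite mn ltxx => /(_ Ax).
by have := lt_trans (xA _ (A_point m)) (A_precedes mn (A_point m) Ax); rewrite ltxx.
Qed.

Lemma A_above n m x : A n x -> (forall y, A m y -> y < x) -> (m < n)%N.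
Proof.
move=> Ax Ax'; rewrite ltnNge leq_eqVlt; apply/negP => /orP[/eqP nm|nm].
  by have := Ax' x; rewrite -nm ltxx => /(_ Ax).
by have := lt_trans (Ax' _ (A_point m)) (A_precedes nm Ax (A_point m)); rewrite ltxx.
Qed.

Lemma A_eq i j x : A i x -> A j x -> i = j.
Proof.
move=> Aix Ajx; case: (ltngtP i j) => // ij.
  by have := A_precedes ij Aix Ajx; rewrite ltxx.
by have := A_precedes ij Ajx Aix; rewrite ltxx.
Qed.

Lemma A_closed (P : nat -> Prop) : orbit_closed f (\bigcup_(n in P) A n).
Proof. by move=> x y [n Pn Ax] xy; exists n => //; apply: orb_rel_trans Ax xy. Qed.

Lemma A0_closed : orbit_closed f (A 0%N).
Proof. by move=> x y Ax xy; apply: orb_rel_trans Ax xy. Qed.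

Let g := restrict (@A_closed setT).
Let g1 := restrict A0_closed.
Let g2 := restrict (@A_closed [set n | n != 0%N]).

Lemma g_in n x : A n x -> g x = f x.
Proof. by move=> Ax; rewrite restrict_in //; exists n. Qed.

Lemma g_out x : (forall n, ~ A n x) -> g x = x.
Proof. by move=> Ax; rewrite restrict_out // => -[n _ /Ax]. Qed.

Lemma g2_in n x : A n.+1 x -> g2 x = f x.
Proof. by move=> Ax; rewrite restrict_in //; exists n.+1. Qed.

Lemma g2_out x : (forall n, ~ A n.+1 x) -> g2 x = x.
Proof. by move=> Ax; rewrite restrict_out // => -[[//|n] _ /Ax]. Qed.

Lemma construction_prod : is_prod g g1 g2.
Proof.
move=> x; have [[n An]|noA] := pselect (exists n, A n x); last first.
  have Ax n : ~ A n x by move=> Ax; apply: noA; exists n.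
  by rewrite g_out // g2_out // restrict_out.
rewrite (g_in An); case: n An => [|n] An.
  by rewrite g2_out ?restrict_in // => m /(A_eq An).
by rewrite (g2_in An) restrict_out // => /(A_eq (A_fn An)).
Qed.

Lemma construction_restriction : restriction g f.
Proof. exact: restrict_restriction. Qed.

Lemma construction_orbital : orbital_elt g1 g.
Proof.
split; first exact: restrict_bump.
by apply: restrict_sub_restriction => x A0x; exists 0%N.
Qed.

Let below n := [set x | forall y, A n y -> x < y].
Let mid n := gap (A n) (A n.+1).
Let beyond := [set x | forall n y, A n y -> y < x].
Let piece n := if n is m.+1 then A m `|` mid m else below 0%N.

Lemma below_mono i j x : (i <= j)%N -> below i x -> below j x.
Proof.
rewrite leq_eqVlt => /orP[/eqP<-//|ij] xi y Ay.
exact: lt_trans (xi _ (A_point i)) (A_precedes ij (A_point i) Ay).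
Qed.

Lemma piece_below n x : piece n x -> below n x.
Proof.
case: n => [//|n] [Ax|[_ xA]] y; last exact: xA.
move=> Ay; exact: (@A_precedes n n.+1 (ltnSn n) x y Ax Ay).
Qed.

Lemma piece_above n y : piece n.+1 y -> exists2 z, A n z & z <= y.
Proof.
move=> [Ay|[Ay _]]; first by exists y.
by exists (a n.*2.+1); [apply: A_point | apply/ltW/Ay/A_point].
Qed.

Lemma piece_lt i j x y : (i < j)%N -> piece i x -> piece j y -> x < y.
Proof.
case: j => // j ij /piece_below xi /piece_above [z Az zy].
exact: lt_le_trans (below_mono (ij : (i <= j)%N) xi Az) zy.
Qed.

Lemma piece_lt_beyond n x y : piece n x -> beyond y -> x < y.
Proof. by move=> /piece_below xn yb; apply: lt_trans (xn _ (A_point n)) (yb _ _ (A_point n)). Qed.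

Lemma piece_cover x : beyond x \/ exists n, piece n x.
Proof.
have [bx|not_beyond] := pselect (beyond x); [by left | right].
have ex : exists n, `[< exists2 y, A n y & x <= y >].
  apply: contrapT => none; apply: not_beyond => n y Ay; rewrite ltNge.
  by apply/negP => xy; apply: none; exists n; apply/asboolP; exists y.
case: (ex_minnP ex) => n /asboolP [y Ay xy] n_min.
have [[z Az zx]|above] := pselect (exists2 z, A n z & z <= x).
  by exists n.+1; left; apply: orbital_convex Az Ay zx xy.
have xA z : A n z -> x < z.
  by move=> Az; rewrite ltNge; apply/negP => zx; apply: above; exists z.
case: n n_min Ay xy above xA => [|n] n_min Ay xy above xA; first by exists 0%N.
exists n.+1; right; split=> // z Az; rewrite ltNge; apply/negP => xz.
by have := n_min n (asboolT (ex_intro2 _ _ z Az xz)); rewrite ltnn.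
Qed.

Lemma below_piece m n x : below m x -> piece n x -> (n <= m)%N.
Proof.
case: n => // n xm /piece_above [z Az zx]; rewrite ltnNge; apply/negP => mn.
by have := below_mono mn xm Az; rewrite ltNge zx.
Qed.

Let src k := if k is k'.+1 then piece k.+1 else below 1.

Lemma src_piece k x : src k x -> exists2 i, (i <= k.+1)%N & piece i x.
Proof.
case: k => [x1|k]; last by exists k.+2.
have [xb|[n xn]] := piece_cover x; last by exists n => //; apply: below_piece x1 xn.
by have := lt_trans (x1 _ (A_point 1)) (xb _ _ (A_point 1)); rewrite ltxx.
Qed.

Lemma src_cover x : beyond x \/ exists k, src k x.
Proof.
have [xb|[[|[|n]] xn]] := piece_cover x; [by left | right..]; last by exists n.+1.
  by exists 0%N; apply: below_mono xn.
by exists 0%N; apply: piece_below xn.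
Qed.

Lemma src_lt j k x y : (j < k)%N -> src j x -> src k y -> x < y.
Proof.
case: k => // k jk /src_piece [i ij xi] yk.
by apply: piece_lt xi yk; apply: leq_ltn_trans ij _.
Qed.

Lemma src_lt_beyond k x y : src k x -> beyond y -> x < y.
Proof. by move=> /src_piece [i _ /piece_lt_beyond]; apply. Qed.

Lemma A_no_max n : no_max (A n). Proof. exact: orbital_no_max. Qed.
Lemma A_no_min n : no_min (A n). Proof. exact: orbital_no_min. Qed.

Lemma belowE n : below n = gap set0 (A n).
Proof. by apply/seteqP; split=> x // [_ xA]. Qed.

Lemma below_two_points n : has_two_points (below n).
Proof.
have [x [y [Ox Oy xy]]] : has_two_points (O n.*2) := orbital_has_two_points (@moved _).
by exists x, y; split=> // z Az;
  [exact: (O_precedes (ltnSn _) Ox Az) | exact: (O_precedes (ltnSn _) Oy Az)].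
Qed.

Lemma mid_two_points n : has_two_points (mid n).
Proof.
have [x [y [Ox Oy xy]]] : has_two_points (O n.*2.+2) := orbital_has_two_points (@moved _).
have lt1 : (n.*2.+1 < n.*2.+2)%N by [].
have lt2 : (n.*2.+2 < n.+1.*2.+1)%N by rewrite doubleS.
exists x, y; split=> //; split=> z Az.
- exact: (O_precedes lt1 Az Ox).
- exact: (O_precedes lt2 Ox Az).
- exact: (O_precedes lt1 Az Oy).
- exact: (O_precedes lt2 Oy Az).
Qed.

Lemma same_sup2 i j : supremums (O i) !=set0 <-> supremums (O j) !=set0.
Proof. exact: iff_trans (same_sup i) (iff_sym (same_sup j)). Qed.

Lemma same_inf2 i j : infimums (O i) !=set0 <-> infimums (O j) !=set0.
Proof. exact: iff_trans (same_inf i) (iff_sym (same_inf j)). Qed.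

Lemma below_iso : isomorphic (below 1) (below 0).
Proof.
have [two1 two0] := (below_two_points 1, below_two_points 0).
have set0_nomax : no_max (@set0 rat) by move=> ? [].
have set0_prec n : precedes set0 (A n) by move=> ? ? [].
rewrite !belowE in two1 two0 *; apply: isomorphic_convex => //; try exact: gap_convex.
  by rewrite !(gap_min set0_nomax (@A_no_min _) (set0_prec _)).
rewrite !(gap_max set0_nomax (@A_no_min _) (set0_prec _)); exact: same_inf2.
Qed.

Lemma mid_iso k : isomorphic (mid k.+1) (mid k).
Proof.
have A_prec n : precedes (A n) (A n.+1) by apply: A_precedes.
apply: isomorphic_convex; try exact: gap_convex; try exact: mid_two_points.
  by rewrite /mid !(gap_min (@A_no_max _) (@A_no_min _) (A_prec _)); apply: same_sup2.
by rewrite /mid !(gap_max (@A_no_max _) (@A_no_min _) (A_prec _)); apply: same_inf2.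
Qed.

Lemma below_notA m n x : below m x -> (m <= n)%N -> ~ A n x.
Proof. by move=> xm mn Ax; have := below_mono mn xm Ax; rewrite ltxx. Qed.

Lemma mid_notA k n x : mid k x -> ~ A n x.
Proof.
move=> [Ax xA] Anx; have := A_below Anx xA; rewrite ltnS leqNgt.
by rewrite (A_above Anx Ax).
Qed.

Lemma beyond_notA n x : beyond x -> ~ A n x.
Proof. by move=> xb Ax; have := xb _ _ Ax; rewrite ltxx. Qed.

Lemma src_conj k : exists p q, order_iso (src k) (piece k) p q /\
  forall x, src k x -> src k (g2 x) /\ g (p x) = p (g2 x).
Proof.
case: k => [|k].
  have [p [q iso]] := below_iso; exists p, q; split=> // x x1.
  rewrite g2_out => [|n]; last exact: below_notA x1 _.
  split=> //; rewrite g_out // => n; apply: below_notA (leq0n n).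
  exact: order_iso_into iso _ x1.
have dir : (a k.+1.*2.+1 < f (a k.+1.*2.+1)) = (a k.*2.+1 < f (a k.*2.+1)).
  by rewrite !same_dir.
have [p1 [q1 [iso1 conj1]]] := orbital_conj (@moved _) (@moved _) dir.
have [p2 [q2 iso2]] := mid_iso k.
have Amid n : precedes (A n) (mid n) by move=> x y Ax [yA _]; apply: yA.
have [p [q [iso [pE1 pE2]]]] := order_iso_setU iso1 iso2 (Amid _) (Amid _).
exists p, q; split=> // x [Ax|midx].
  rewrite (g2_in Ax); split; first by left; apply: A_fn.
  rewrite (pE1 _ (A_fn Ax)) (pE1 _ Ax) conj1 //; apply: g_in.
  exact: order_iso_into iso1 _ Ax.
rewrite g2_out => [|n]; last exact: mid_notA midx.
split; first by right.
rewrite (pE2 _ midx) g_out // => n; apply: (@mid_notA k n).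
exact: order_iso_into iso2 _ midx.
Qed.

Lemma construction_conjugate : conjugate g g2.
Proof.
have /choice [pq pqP] k : exists pq : (rat -> rat) * (rat -> rat),
    order_iso (src k) (piece k) pq.1 pq.2 /\
    forall x, src k x -> src k (g2 x) /\ g (pq.1 x) = pq.1 (g2 x).
  by have [p [q iso]] := src_conj k; exists (p, q).
pose P o := if o is Some k then src k else beyond.
pose Q o := if o is Some k then piece k else beyond.
have [|||h [h' [iso hE]]] := @order_iso_bigcup _ P Q
  (fun o => if o is Some k then (pq k).1 else id)
  (fun o => if o is Some k then (pq k).2 else id).
- by case=> [k|]; [case: (pqP k) | split].
- case=> [j|] [k|] x //= xj xk.
  + by congr Some; case: (ltngtP j k) => // jk;
      [have := src_lt jk xj xk | have := src_lt jk xk xj]; rewrite ltxx.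
  + by have := src_lt_beyond xj xk; rewrite ltxx.
  + by have := src_lt_beyond xk xj; rewrite ltxx.
- case=> [j|] [k|] x y //= jk xj yk xy.
  + have [jk'|kj|eq_jk] := ltngtP j k; last by case: jk; rewrite eq_jk.
      exact: (piece_lt jk' (order_iso_into (pqP j).1 xj) (order_iso_into (pqP k).1 yk)).
    by have := lt_trans xy (src_lt kj yk xj); rewrite ltxx.
  + exact: (piece_lt_beyond (order_iso_into (pqP j).1 xj) yk).
  + by have := lt_trans xy (src_lt_beyond yk xj); rewrite ltxx.
have cover (R : option nat -> set rat) : (forall x, beyond x \/ exists k, R (Some k) x) ->
    R None = beyond -> \bigcup_o R o = setT.
  move=> Rcover RN; apply/seteqP; split=> // x _.
  by case: (Rcover x) => [xb|[k xk]]; [exists None; rewrite ?RN | exists (Some k)].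
rewrite !cover // in iso; [|exact: piece_cover | exact: src_cover].
exists (aut_of_order_iso iso) => x /=.
have [xb|[k xk]] := src_cover x.
  have notA n : ~ A n x by apply: beyond_notA xb.
  by rewrite g2_out // (hE None x xb) g_out.
have [g2x E] := (pqP k).2 x xk.
by rewrite (hE (Some k) _ xk) (hE (Some k) _ g2x) E.
Qed.

Lemma construction_factorization : exists g g1 g2 : aut,
  restriction g f /\ orbital_elt g1 g /\ is_prod g g1 g2 /\ conjugate g g2.
Proof.
exists g, g1, g2; split; first exact: construction_restriction.
split; first exact: construction_orbital.
by split; [exact: construction_prod | exact: construction_conjugate].
Qed.

End Construction.

Lemma dependent_choice T (Z : set T) (R : T -> T -> Prop) z0 : Z z0 ->
    (forall z, Z z -> exists2 w, Z w & R z w) ->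
  exists u : nat -> T, (forall n, Z (u n)) /\ forall n, R (u n) (u n.+1).
Proof.
move=> Zz0 step; have /choice [next nextP] z : exists w, Z z -> Z w /\ R z w.
  have [Zz|nZz] := pselect (Z z); last by exists z.
  by have [w Zw Rzw] := step z Zz; exists w.
have Zu n : Z (iter n next z0) by elim: n => [|n IH] //=; case: (nextP _ IH).
by exists (fun n => iter n next z0); split=> // n; case: (nextP _ (Zu n)).
Qed.

Lemma infinite_monotone_seq T (S : set T) (lt : T -> T -> Prop) : infinite_set S ->
    (forall x y, S x -> S y -> x <> y -> lt x y \/ lt y x) ->
  exists u : nat -> T, (forall n, S (u n)) /\
    ((forall n, lt (u n) (u n.+1)) \/ (forall n, lt (u n.+1) (u n))).
Proof.
move=> S_inf S_total; pose up x := [set y | S y /\ lt x y].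
have [[Z [Z_inf ZS Z_fin]]|noZ] := pselect (exists Z,
    [/\ infinite_set Z, Z `<=` S & forall z, Z z -> finite_set (up z)]).
  have step z : Z z -> exists2 w, Z w & lt w z.
    move=> Zz; apply: contrapT => nolt; apply: Z_inf.
    apply: (@sub_finite_set _ _ (up z `|` [set z])); last first.
      by rewrite finite_setU; split; [exact: Z_fin | exact: finite_set1].
    move=> w Zw; have [->|wz] := pselect (w = z); first by right.
    have [zw|wz'] := S_total _ _ (ZS _ Zz) (ZS _ Zw) (nesym wz); first by left; split=> //; apply: ZS.
    by case: nolt; exists w.
  have [z0 Zz0] := infinite_setN0 Z_inf.
  by have [u [Zu Ru]] := dependent_choice Zz0 step; exists u; split=> [n|]; [apply: ZS | right].
have up_inf Z : infinite_set Z -> Z `<=` S -> exists2 z, Z z & infinite_set (up z).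
  move=> Z_inf ZS; apply: contrapT => fin; apply: noZ; exists Z; split=> // z Zz.
  by apply: contrapT => z_inf; apply: fin; exists z.
have [y0 Sy0 y0_inf] := up_inf S S_inf (@subset_refl _ S).
have step x : S x /\ infinite_set (up x) ->
    exists2 y, S y /\ infinite_set (up y) & lt x y.
  move=> [_ x_inf]; have [y [Sy xy] y_inf] := up_inf _ x_inf (fun=> @proj1 _ _).
  by exists y.
have [u [Yu Ru]] := dependent_choice (conj Sy0 y0_inf) step.
by exists u; split=> [n|]; [case: (Yu n) | left].
Qed.

Lemma infinite_fiber T (K : finType) (S : set T) (key : T -> K) : infinite_set S ->
  exists k, infinite_set (S `&` key @^-1` [set k]).
Proof.
move=> S_inf; apply: contrapT => fin; apply: S_inf.
have -> : S = \bigcup_(k in setT) (S `&` key @^-1` [set k]).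
  by apply/seteqP; split=> [x Sx|x [k _ []]] //; exists (key x).
apply: bigcup_finite => // k _; apply: contrapT => k_inf; by apply: fin; exists k.
Qed.

Section Reflection.
Variable f : aut.

Let neg_fnK : cancel (fun x => - f (- x)) (fun x => - finv f (- x)).
Proof. by move=> x; rewrite opprK fnK opprK. Qed.

Let neg_finvK : cancel (fun x => - finv f (- x)) (fun x => - f (- x)).
Proof. by move=> x; rewrite opprK finvK opprK. Qed.

Let neg_fn_lt : {homo (fun x => - f (- x)) : x y / x < y}.
Proof. by move=> x y xy; rewrite ltrN2 aut_ltE ltrN2. Qed.

Definition neg_aut : aut := Aut neg_fnK neg_finvK neg_fn_lt.

Lemma neg_autE x : neg_aut x = - f (- x).
Proof. by []. Qed.

Lemma zpow_neg_aut k x : zpow neg_aut k x = - zpow f k (- x).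
Proof.
have iter_neg (h : rat -> rat) n y : iter n (fun x => - h (- x)) y = - iter n h (- y).
  by elim: n => [|n IH] /=; rewrite ?opprK // IH opprK.
by case: k => n; apply: iter_neg.
Qed.

Lemma orbital_of_neg_aut x : orbital_of neg_aut x = -%R @^-1` orbital_of f (- x).
Proof.
apply/seteqP; split=> y [m [n]]; rewrite ?zpow_neg_aut => -[my yn].
  by exists n, m; rewrite lerNl lerNr.
by exists n, m; rewrite !zpow_neg_aut lerNl lerNr.
Qed.

Lemma supp_neg_aut : supp neg_aut = -%R @^-1` supp f.
Proof.
apply/seteqP; split=> x; rewrite /supp /= => fx E; apply: fx.
  by rewrite E opprK.
by rewrite -[in RHS]E opprK.
Qed.

End Reflection.

Lemma is_bump_neg_aut g : is_bump g -> is_bump (neg_aut g).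
Proof.
have moved_neg y : supp (neg_aut g) y <-> supp g (- y) by rewrite supp_neg_aut.
move=> [[x gx] [O gO]]; split.
  by exists (- x); apply/moved_neg; rewrite opprK.
exists (-%R @^-1` O); apply/seteqP; split=> O' /=.
  move=> /nontriv_orbitalsP [y /moved_neg gy ->]; rewrite orbital_of_neg_aut.
  have : nontriv_orbitals g (orbital_of g (- y)) by apply/nontriv_orbitalsP; exists (- y).
  by rewrite gO => ->.
move=> ->; have : nontriv_orbitals g O by rewrite gO.
move=> /nontriv_orbitalsP [y gy ->]; apply/nontriv_orbitalsP; exists (- y).
  by apply/moved_neg; rewrite opprK.
by rewrite orbital_of_neg_aut opprK.
Qed.

Lemma factorization_neg_aut f :
  (exists g g1 g2 : aut, restriction g (neg_aut f) /\ orbital_elt g1 g /\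
     is_prod g g1 g2 /\ conjugate g g2) ->
  exists g g1 g2 : aut,
    restriction g f /\ orbital_elt g1 g /\ is_prod g g1 g2 /\ conjugate g g2.
Proof.
move=> [g [g1 [g2 [[gf_supp gf] [[g1_bump [g1_supp g1g]] [prod [h gh]]]]]]].
have suppN (k : aut) x : supp (neg_aut k) x <-> supp k (- x) by rewrite supp_neg_aut.
exists (neg_aut g), (neg_aut g1), (neg_aut g2); split; [|split; [|split]].
- split=> x /suppN gx; last by rewrite !neg_autE gf // neg_autE !opprK.
  by have /gf_supp/suppN := gx; rewrite opprK.
- split; first exact: is_bump_neg_aut.
  by split=> x /suppN g1x; [apply/suppN/g1_supp | rewrite !neg_autE g1g].
- by move=> x; rewrite !neg_autE prod opprK.
- by exists (neg_aut h) => x; rewrite !neg_autE !opprK gh.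
Qed.

Lemma supremums_oppr (B : set rat) :
  supremums (-%R @^-1` B) !=set0 <-> infimums B !=set0.
Proof.
split=> -[r [rB Br]]; exists (- r); split.
- by move=> x Bx; rewrite lerNl; apply: rB; rewrite /= opprK.
- by move=> y yB; rewrite lerNr; apply: Br => z /= /yB; rewrite lerNr.
- by move=> x /= /rB; rewrite lerNr.
- by move=> y yB; rewrite lerNl; apply: Br => z Bz; rewrite lerNl; apply: yB; rewrite /= opprK.
Qed.

Lemma infimums_oppr (B : set rat) :
  infimums (-%R @^-1` B) !=set0 <-> supremums B !=set0.
Proof.
split=> -[r [rB Br]]; exists (- r); split.
- by move=> x Bx; rewrite lerNr; apply: rB; rewrite /= opprK.
- by move=> y yB; rewrite lerNl; apply: Br => z /= /yB; rewrite lerNl.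
- by move=> x /= /rB; rewrite lerNl.
- by move=> y yB; rewrite lerNr; apply: Br => z Bz; rewrite lerNr; apply: yB; rewrite /= opprK.
Qed.

Lemma infinite_orbitals_factorization (f : aut) : infinite_set (nontriv_orbitals f) ->
  exists g g1 g2 : aut,
    restriction g f /\ orbital_elt g1 g /\ is_prod g g1 g2 /\ conjugate g g2.
Proof.
move=> orbs_inf.
have /choice [rep repP] O : exists a, nontriv_orbitals f O -> f a <> a /\ O = orbital_of f a.
  have [/nontriv_orbitalsP [a fa ->]|nO] := pselect (nontriv_orbitals f O).
    by exists a.
  by exists 0 => /nO.
pose key O := (rep O < f (rep O), `[< supremums O !=set0 >], `[< infimums O !=set0 >]).
have [k k_inf] := infinite_fiber key orbs_inf.
have [|u [uS u_mono]] := infinite_monotone_seq (lt := precedes) k_inf.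
  by move=> O O' [/repP [_ ->] _] [/repP [_ ->] _]; apply: orbital_of_precedes.
pose a n := rep (u n).
have uP n : f (a n) <> a n /\ u n = orbital_of f (a n) by case: (uS n) => /repP.
have keyE n : key (u n) = key (u 0%N) by case: (uS n) => _ ->; case: (uS 0%N) => _ ->.
have same_dir n : (a n < f (a n)) = (a 0%N < f (a 0%N)) by case: (keyE n).
have same_sup n : supremums (orbital_of f (a n)) !=set0 <->
    supremums (orbital_of f (a 0%N)) !=set0.
  by rewrite -(uP n).2 -(uP 0%N).2; apply: asbool_eq_equiv; case: (keyE n).
have same_inf n : infimums (orbital_of f (a n)) !=set0 <->
    infimums (orbital_of f (a 0%N)) !=set0.
  by rewrite -(uP n).2 -(uP 0%N).2; apply: asbool_eq_equiv; case: (keyE n).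
have moved n : f (a n) <> a n := (uP n).1.
case: u_mono => u_mono.
  apply: (construction_factorization moved _ same_dir same_sup same_inf) => n.
  by rewrite -(uP n).2 -(uP n.+1).2.
have gtE m : (f (a m) < a m) = ~~ (a m < f (a m)).
  by rewrite -leNgt le_eqVlt orb_idl // => /eqP /moved.
apply: factorization_neg_aut.
apply: (@construction_factorization _ (fun n => - a n)) => n.
- by rewrite neg_autE opprK => /oppr_inj /moved.
- rewrite !orbital_of_neg_aut !opprK => x y Ox Oy; rewrite -ltrN2.
  by apply: (u_mono n); rewrite (uP _).2.
- by rewrite !neg_autE !opprK !ltrN2 !gtE same_dir.
- by rewrite !orbital_of_neg_aut !opprK !supremums_oppr.
- by rewrite !orbital_of_neg_aut !opprK !infimums_oppr.
Qed.

Theorem lemma2p2 (f : aut) :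
  (exists g g1 g2 : aut,
      restriction g f /\ orbital_elt g1 g /\ is_prod g g1 g2 /\ conjugate g g2)
  <-> infinite_set (nontriv_orbitals f).
Proof.
split; [exact: factorization_infinite_orbitals | exact: infinite_orbitals_factorization].
Qed.
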